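(* Let $A,B,C,D,E\in\mathbb{C}$ with $E\neq0$ and $M=\{(x,y,z)\in\mathbb{C}^3 : x^2+y^2+z^2+Exyz-Ax-By-Cz-D=0\}$. The vector fields \begin{align*} V^x&=(2z+Exy-C)\tfrac{\partial}{\partial y}-(2y+Exz-B)\tfrac{\partial}{\partial z},\\ V^y&=-(2z+Exy-C)\tfrac{\partial}{\partial x}+(2x+Eyz-A)\tfrac{\partial}{\partial z},\\ V^z&=(2y+Exz-B)\tfrac{\partial}{\partial x}-(2x+Eyz-A)\tfrac{\partial}{\partial y} \end{align*} are tangent to $M$, and each of them is complete on $M$ (its flow exists for all complex times). *)

From Stdlib Require Import Reals.
From Coquelicot Require Import Coquelicot.
Open Scope C_scope.

Definition pt := (C * C * C)%type.

Definition Fcubic (a b c d e : C) (p : pt) : C :=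
  let '(x, y, z) := p in
  x * x + y * y + z * z + e * x * y * z - a * x - b * y - c * z - d.

Definition onM (a b c d e : C) (p : pt) : Prop := Fcubic a b c d e p = 0.

(* vector fields, as maps C^3 -> C^3 (components along d/dx, d/dy, d/dz) *)
Definition Vx (a b c d e : C) (p : pt) : pt :=
  let '(x, y, z) := p in
  ((0:C), 2 * z + e * x * y - c, - (2 * y + e * x * z - b)).
Definition Vy (a b c d e : C) (p : pt) : pt :=
  let '(x, y, z) := p in
  (- (2 * z + e * x * y - c), (0:C), 2 * x + e * y * z - a).
Definition Vz (a b c d e : C) (p : pt) : pt :=
  let '(x, y, z) := p in
  (2 * y + e * x * z - b, - (2 * x + e * y * z - a), (0:C)).

Definition ptadd (p q : pt) : pt :=
  let '(x, y, z) := p in let '(x', y', z') := q in (x + x', y + y', z + z').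
Definition ptscale (s : C) (p : pt) : pt :=
  let '(x, y, z) := p in (s * x, s * y, s * z).

(* V is tangent to M: at every p in M, the derivative of F along V(p)
   vanishes, i.e. d/ds F(p + s V(p)) at s = 0 is 0 (dF_p(V(p)) = 0). *)
Definition tangent_to_M (a b c d e : C) (V : pt -> pt) : Prop :=
  forall p : pt, onM a b c d e p ->
    is_derive (fun s : C => Fcubic a b c d e (ptadd p (ptscale s (V p)))) (0:C) (0:C).

Definition entire_integral_curve (V : pt -> pt) (g : C -> pt) : Prop :=
  forall t : C,
    is_derive (fun s => fst (fst (g s))) t (fst (fst (V (g t)))) /\
    is_derive (fun s => snd (fst (g s))) t (snd (fst (V (g t)))) /\
    is_derive (fun s => snd (g s)) t (snd (V (g t))).

Definition complete_on_M (a b c d e : C) (V : pt -> pt) : Prop :=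
  forall p : pt, onM a b c d e p ->
    exists g : C -> pt, g (0:C) = p /\ entire_integral_curve V g /\
      (forall t : C, onM a b c d e (g t)).

(* Tangency: V^x = grad F x e_x, and similarly for V^y, V^z, so dF(V) = 0.
   Completeness: V^x preserves the planes x = x0, on which F = x0^2 - A x0 - D + G with
   G(y,z) = y^2 + z^2 + k y z - B y - C z, k = E x0, and V^x = (dG/dz, -dG/dy) is the
   Hamiltonian field of G. It is affine with linear part M = [[k, 2], [-2, -k]], M^2 = (k^2 - 4) I,
   so its flow is an entire combination of exp(+-w t), w^2 = k^2 - 4, or a quadratic polynomial
   in t when k = +-2; G, hence F, is constant along it. V^y and V^z are V^x conjugated by the
   cyclic permutation of coordinates. *)

From Pilot Require Import Defs.
From Stdlib Require Import Reals Lra.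
From Coquelicot Require Import Coquelicot.
Open Scope C_scope.

(* [Defs] states derivatives with the [C_NormedModule] instance, whereas Coquelicot's product
   and chain rules are stated for [AbsRing_NormedModule C_AbsRing]; the two agree. *)
Notation is_Cderive f x l := (@is_derive C_AbsRing C_NormedModule f x l).

Lemma is_derive_C_AbsRing_NormedModule (f : C -> C) (x l : C) :
  @is_derive C_AbsRing (AbsRing_NormedModule C_AbsRing) f x l <-> is_Cderive f x l.
Proof.
  split; intros [[Hplus Hscal [M HM]] Hdomin];
    (split; [split; [exact Hplus | exact Hscal | exists M; exact HM] | exact Hdomin]).
Qed.

Lemma is_Cderive_const (c x : C) : is_Cderive (fun _ => c) x (0 : C).
Proof. exact (is_derive_const c x). Qed.

Lemma is_Cderive_id (x : C) : is_Cderive (fun t => t) x (1 : C).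
Proof. apply is_derive_C_AbsRing_NormedModule, (is_derive_id (K := C_AbsRing)). Qed.

Lemma is_Cderive_plus (f g : C -> C) (x l m : C) :
  is_Cderive f x l -> is_Cderive g x m -> is_Cderive (fun t => f t + g t) x (l + m).
Proof. exact (is_derive_plus f g x l m). Qed.

Lemma is_Cderive_minus (f g : C -> C) (x l m : C) :
  is_Cderive f x l -> is_Cderive g x m -> is_Cderive (fun t => f t - g t) x (l - m).
Proof. exact (is_derive_minus f g x l m). Qed.

Lemma is_Cderive_opp (f : C -> C) (x l : C) :
  is_Cderive f x l -> is_Cderive (fun t => - f t) x (- l).
Proof. exact (is_derive_opp f x l). Qed.

Lemma is_Cderive_mult (f g : C -> C) (x l m : C) :
  is_Cderive f x l -> is_Cderive g x m ->
  is_Cderive (fun t => f t * g t) x (l * g x + f x * m).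
Proof.
  rewrite <- !is_derive_C_AbsRing_NormedModule. intros Hf Hg.
  exact (is_derive_mult f g x l m Hf Hg Cmult_comm).
Qed.

Lemma is_Cderive_comp (f g : C -> C) (x l m : C) :
  is_Cderive f (g x) l -> is_Cderive g x m -> is_Cderive (fun t => f (g t)) x (m * l).
Proof.
  intros Hf Hg. apply (is_derive_comp f g x l m Hf).
  now apply is_derive_C_AbsRing_NormedModule.
Qed.

Lemma is_Cderive_eq (f : C -> C) (x l l' : C) :
  is_Cderive f x l' -> l' = l -> is_Cderive f x l.
Proof. now intros H <-. Qed.

Definition cexp (z : C) : C :=
  ((exp (fst z) * cos (snd z))%R, (exp (fst z) * sin (snd z))%R).

Lemma cexp_add (z w : C) : cexp (z + w) = cexp z * cexp w.
Proof.
  destruct z as [a b], w as [c d]; unfold cexp, Cplus, Cmult; simpl.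
  rewrite exp_plus, cos_plus, sin_plus. f_equal; ring.
Qed.

Lemma cexp_0 : cexp 0 = 1.
Proof.
  unfold cexp; simpl. rewrite exp_0, cos_0, sin_0.
  apply injective_projections; simpl; ring.
Qed.

Lemma cexp_neq0 (z : C) : cexp z <> 0.
Proof.
  intros Hz. apply C1_nz.
  rewrite <- cexp_0, <- (Cplus_opp_r z), cexp_add, Hz. ring.
Qed.

Lemma cexp_opp (z : C) : cexp (- z) = / cexp z.
Proof.
  rewrite <- (Cmult_1_l (/ cexp z)), <- cexp_0, <- (Cplus_opp_r z), cexp_add.
  field. apply cexp_neq0.
Qed.

Lemma derivable_pt_lim_remainder (f : R -> R) (x l eps : R) :
  derivable_pt_lim f x l -> (0 < eps)%R ->
  exists del : posreal, forall h : R,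
    (Rabs h < del -> Rabs (f (x + h) - f x - h * l) <= eps * Rabs h)%R.
Proof.
  intros Hf Heps. destruct (Hf eps Heps) as [del Hdel]. exists del. intros h Hh.
  destruct (Req_dec h 0) as [-> | Hh0].
  - rewrite Rplus_0_r, Rabs_R0. replace (f x - f x - 0 * l)%R with 0%R by ring.
    rewrite Rabs_R0. lra.
  - replace (f (x + h) - f x - h * l)%R with (h * ((f (x + h) - f x) / h - l))%R
      by (field; exact Hh0).
    rewrite Rabs_mult, Rmult_comm.
    apply Rmult_le_compat_r; [apply Rabs_pos | left; exact (Hdel h Hh0 Hh)].
Qed.

Lemma Cmod_le_components (u : C) (r : R) :
  (Rabs (fst u) <= r -> Rabs (snd u) <= r -> Cmod u <= 2 * r)%R.
Proof.
  intros H1 H2. eapply Rle_trans; [apply Cmod_2Rmax |].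
  assert (Hmax : (Rmax (Rabs (fst u)) (Rabs (snd u)) <= r)%R) by (apply Rmax_lub; assumption).
  assert (Hsqrt2 : (sqrt 2 <= 2)%R).
  { rewrite <- (sqrt_square 2) at 2 by lra. apply sqrt_le_1_alt. lra. }
  pose proof (Rle_trans _ _ _ (Rabs_pos (fst u)) (Rmax_l _ (Rabs (snd u)))).
  pose proof (sqrt_pos 2). nra.
Qed.

Lemma cexp_remainder_components (a b : R) :
  cexp (a, b) - 1 - (a, b) =
  ((exp a * (cos b - 1) + (exp a - 1 - a))%R, (exp a * (sin b - b) + (exp a - 1) * b)%R).
Proof. unfold cexp; apply injective_projections; simpl; ring. Qed.

Lemma cexp_remainder_small (eps : R) : (0 < eps)%R ->
  exists del : posreal, forall h : C, (Cmod h < del -> Cmod (cexp h - 1 - h) <= eps * Cmod h)%R.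
Proof.
  intros Heps.
  (* [eta <= 1] gives [|exp a - 1| <= (eta + 1) |a| <= eta] once [|a| < eta / 2]. *)
  set (eta := (Rmin eps 1 / 8)%R).
  assert (Heta : (0 < eta <= 1 /\ 8 * eta <= eps)%R).
  { unfold eta, Rmin; destruct Rle_dec; lra. }
  destruct (derivable_pt_lim_remainder exp 0 1 eta (derivable_pt_lim_exp_0) ltac:(lra))
    as [d1 Hexp].
  destruct (derivable_pt_lim_remainder cos 0 _ eta (derivable_pt_lim_cos 0) ltac:(lra))
    as [d2 Hcos].
  destruct (derivable_pt_lim_remainder sin 0 _ eta (derivable_pt_lim_sin 0) ltac:(lra))
    as [d3 Hsin].
  assert (Hdel : (0 < Rmin (Rmin d1 d2) (Rmin d3 (eta / 2)))%R).
  { repeat apply Rmin_pos; try apply cond_pos; lra. }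
  exists (mkposreal _ Hdel). intros [a b] Hab; simpl in Hab.
  pose proof (Rmax_Cmod (a, b)) as Hmax; simpl in Hmax.
  assert (Ha : (Rabs a <= Cmod (a, b))%R) by (eapply Rle_trans; [apply Rmax_l | exact Hmax]).
  assert (Hb : (Rabs b <= Cmod (a, b))%R) by (eapply Rle_trans; [apply Rmax_r | exact Hmax]).
  assert (Hsmall_a := Rle_lt_trans _ _ _ Ha Hab).
  assert (Hsmall_b := Rle_lt_trans _ _ _ Hb Hab).
  apply Rmin_Rgt in Hsmall_a as [Ha12 Ha34]. apply Rmin_Rgt in Ha12 as [Ha1 _].
  apply Rmin_Rgt in Ha34 as [_ Ha4].
  apply Rmin_Rgt in Hsmall_b as [Hb12 Hb34]. apply Rmin_Rgt in Hb12 as [_ Hb2].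
  apply Rmin_Rgt in Hb34 as [Hb3 _].
  specialize (Hexp a Ha1). specialize (Hcos b Hb2). specialize (Hsin b Hb3).
  rewrite Rplus_0_l, exp_0, Rmult_1_r in Hexp.
  rewrite Rplus_0_l, cos_0, sin_0, Ropp_0, Rmult_0_r, Rminus_0_r in Hcos.
  rewrite Rplus_0_l, sin_0, cos_0, Rmult_1_r, Rminus_0_r in Hsin.
  assert (Hexp_pos : (0 < exp a <= 3)%R).
  { split; [apply exp_pos |]. eapply Rle_trans; [| apply exp_le_3].
    left; apply exp_increasing. apply Rabs_def2 in Ha4 as [? ?]. lra. }
  assert (Hexp_1 : (Rabs (exp a - 1) <= eta)%R).
  { replace (exp a - 1)%R with ((exp a - 1 - a) + a)%R by ring.
    eapply Rle_trans; [apply Rabs_triang |]. nra. }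
  rewrite cexp_remainder_components.
  apply Rle_trans with (2 * (4 * eta * Cmod (a, b)))%R.
  2: pose proof (Cmod_ge_0 (a, b)); nra.
  apply Cmod_le_components; simpl;
    (eapply Rle_trans; [apply Rabs_triang |]);
    rewrite !Rabs_mult, (Rabs_pos_eq (exp a)) by lra.
  - pose proof (Rabs_pos (cos b - 1)). nra.
  - pose proof (Rabs_pos (sin b - b)). pose proof (Rabs_pos b). nra.
Qed.

Lemma is_Cderive_cexp_0 : is_Cderive cexp (0 : C) (1 : C).
Proof.
  split; [apply is_linear_scal_l |].
  intros x Hx.
  apply (is_filter_lim_locally_unique (K := C_AbsRing) (V := AbsRing_NormedModule C_AbsRing))
    in Hx.
  subst x.
  intros eps. destruct (cexp_remainder_small eps (cond_pos eps)) as [del Hdel].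
  exists del. intros h Hh. change C in h.
  change (Cmod (h - 0) < del)%R in Hh.
  change (Cmod (cexp h - cexp 0 - (h - 0) * 1) <= eps * Cmod (h - 0))%R.
  replace (h - 0) with h in * by ring. rewrite cexp_0, Cmult_1_r. exact (Hdel h Hh).
Qed.

Lemma is_Cderive_cexp (z : C) : is_Cderive cexp z (cexp z).
Proof.
  apply (is_derive_ext (fun t => cexp z * cexp (t - z))).
  { intros t. rewrite <- cexp_add. f_equal. ring. }
  eapply is_Cderive_eq.
  - apply is_Cderive_mult; [apply is_Cderive_const |].
    apply (is_Cderive_comp cexp (fun t => t - z)).
    + replace (z - z) with (0 : C) by ring. exact is_Cderive_cexp_0.
    + apply is_Cderive_minus; [apply is_Cderive_id | apply is_Cderive_const].
  - cbv beta. replace (z - z) with (0 : C) by ring. rewrite cexp_0. ring.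
Qed.

Lemma is_Cderive_cexp_scal (w x : C) :
  is_Cderive (fun t => cexp (w * t)) x (w * cexp (w * x)).
Proof.
  eapply is_Cderive_eq.
  - apply (is_Cderive_comp cexp (fun t => w * t)); [apply is_Cderive_cexp |].
    apply is_Cderive_mult; [apply is_Cderive_const | apply is_Cderive_id].
  - cbv beta. ring.
Qed.

Ltac is_Cderive_rules :=
  match goal with
  | |- is_Cderive (fun _ => ?c) _ _ => apply is_Cderive_const
  | |- is_Cderive (fun t => t) _ _ => apply is_Cderive_id
  | |- is_Cderive (fun t => cexp (?w * t)) _ _ => apply is_Cderive_cexp_scal
  | |- is_Cderive (fun t => @?f t + @?g t) _ _ => apply (is_Cderive_plus f g); is_Cderive_rules
  | |- is_Cderive (fun t => @?f t - @?g t) _ _ => apply (is_Cderive_minus f g); is_Cderive_rules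
  | |- is_Cderive (fun t => @?f t * @?g t) _ _ => apply (is_Cderive_mult f g); is_Cderive_rules
  | |- is_Cderive (fun t => - @?f t) _ _ => apply (is_Cderive_opp f); is_Cderive_rules
  end.

Ltac auto_Cderive := eapply is_Cderive_eq; [is_Cderive_rules | cbv beta].

Lemma Csqrt_exists (w : C) : exists s : C, s * s = w.
Proof.
  destruct w as [u v].
  set (r := sqrt (u * u + v * v)).
  assert (Hr : (0 <= r /\ r * r = u * u + v * v)%R).
  { split; [apply sqrt_pos | apply sqrt_sqrt; nra]. }
  assert (Hu : (- r <= u <= r)%R).
  { apply Rabs_le_between. rewrite <- (Rabs_pos_eq r) by lra.
    apply Rsqr_le_abs_0. unfold Rsqr. nra. }
  set (p := sqrt ((r + u) / 2)). set (q := sqrt ((r - u) / 2)).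
  assert (Hp : (p * p = (r + u) / 2)%R) by (apply sqrt_sqrt; lra).
  assert (Hq : (q * q = (r - u) / 2)%R) by (apply sqrt_sqrt; lra).
  assert (Hpq : (p * q = Rabs v / 2)%R).
  { unfold p, q. rewrite <- sqrt_mult by lra.
    replace ((r + u) / 2 * ((r - u) / 2))%R with (Rabs v / 2 * (Rabs v / 2))%R.
    - apply sqrt_square. pose proof (Rabs_pos v). lra.
    - assert (Hv2 : (Rabs v * Rabs v = v * v)%R) by (rewrite <- Rabs_mult; apply Rabs_pos_eq; nra).
      nra. }
  destruct (Rle_dec 0 v) as [Hv | Hv].
  - exists (p, q). rewrite Rabs_pos_eq in Hpq by exact Hv.
    apply injective_projections; simpl; nra.
  - exists (p, (- q)%R). rewrite Rabs_left in Hpq by lra.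
    apply injective_projections; simpl; nra.
Qed.

Lemma Cmult_self_eq (z a : C) : z * z = a * a -> z = a \/ z = - a.
Proof.
  intros Hz. destruct (Ceq_dec (z - a) 0) as [Hm | Hm].
  - left. apply Ceq_minus, Hm.
  - right. apply Ceq_minus. destruct (Ceq_dec (z - - a) 0) as [Hp | Hp]; [exact Hp |].
    exfalso. apply (Cmult_neq_0 _ _ Hm Hp).
    replace ((z - a) * (z - - a)) with (z * z - a * a) by ring. rewrite Hz. ring.
Qed.

Section PlanarFlow.

Variables k b c : C.

Definition planar_energy (y z : C) : C := y * y + z * z + k * y * z - b * y - c * z.

Definition is_planar_flow (y0 z0 : C) (Y Z : C -> C) : Prop :=
  Y 0 = y0 /\ Z 0 = z0 /\
  (forall t, is_Cderive Y t (2 * Z t + k * Y t - c)) /\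
  (forall t, is_Cderive Z t (- (2 * Y t + k * Z t - b))) /\
  (forall t, planar_energy (Y t) (Z t) = planar_energy y0 z0).

Lemma planar_flow_hyperbolic (l y0 z0 : C) :
  l <> 0 -> l * l <> 1 -> k = l + / l -> exists Y Z, is_planar_flow y0 z0 Y Z.
Proof.
  intros Hl Hl2 Hk. apply Cminus_eq_contra in Hl2.
  unfold is_planar_flow, planar_energy. subst k.
  set (w := l - / l).
  (* (P1, P2) is the equilibrium; M^2 = w^2, so (U +- M U / w) / 2 are eigenvectors of M
     for +-w, where U = (U1, U2) and M U = (MU1, MU2). *)
  set (P1 := (c * (l + / l) - 2 * b) / (w * w)).
  set (P2 := ((l + / l) * b - 2 * c) / (w * w)).
  set (U1 := y0 - P1). set (U2 := z0 - P2).
  set (MU1 := (l + / l) * U1 + 2 * U2). set (MU2 := -2 * U1 - (l + / l) * U2).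
  exists (fun t => P1 + (U1 + MU1 / w) / 2 * cexp (w * t) + (U1 - MU1 / w) / 2 * cexp ((- w) * t)).
  exists (fun t => P2 + (U2 + MU2 / w) / 2 * cexp (w * t) + (U2 - MU2 / w) / 2 * cexp ((- w) * t)).
  split; [| split; [| split; [| split]]].
  - rewrite !Cmult_0_r, cexp_0. unfold U1, w. field. tauto.
  - rewrite !Cmult_0_r, cexp_0. unfold U2, w. field. tauto.
  - intros t. auto_Cderive. unfold MU1, MU2, U1, U2, P1, P2, w. field. tauto.
  - intros t. auto_Cderive. unfold MU1, MU2, U1, U2, P1, P2, w. field. tauto.
  - intros t. replace ((- w) * t) with (- (w * t)) by ring. rewrite cexp_opp.
    pose proof (cexp_neq0 (w * t)) as HE. set (E := cexp (w * t)) in *. clearbody E.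
    unfold MU1, MU2, U1, U2, P1, P2, w. field. tauto.
Qed.

Lemma planar_flow_parabolic (y0 z0 : C) :
  k * k = 2 * 2 -> exists Y Z, is_planar_flow y0 z0 Y Z.
Proof.
  intros Hk. apply Cmult_self_eq in Hk.
  unfold is_planar_flow, planar_energy.
  (* M^2 = 0: constant acceleration (a1, a2) = M (v1, v2) from the initial velocity (v1, v2). *)
  set (v1 := k * y0 + 2 * z0 - c). set (v2 := - (2 * y0 + k * z0 - b)).
  set (a1 := 2 * b - k * c). set (a2 := 2 * c - k * b).
  exists (fun t => y0 + t * v1 + t * t * (a1 / 2)).
  exists (fun t => z0 + t * v2 + t * t * (a2 / 2)).
  split; [| split; [| split; [| split]]].
  - ring.
  - ring.
  - intros t. auto_Cderive. unfold v1, v2, a1, a2. destruct Hk as [-> | ->]; field.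
  - intros t. auto_Cderive. unfold v1, v2, a1, a2. destruct Hk as [-> | ->]; field.
  - intros t. unfold v1, v2, a1, a2. destruct Hk as [-> | ->]; field.
Qed.

Lemma planar_flow_exists (y0 z0 : C) : exists Y Z, is_planar_flow y0 z0 Y Z.
Proof.
  destruct (Ceq_dec (k * k) (2 * 2)) as [Hk | Hk]; [now apply planar_flow_parabolic |].
  destruct (Csqrt_exists (k * k - 2 * 2)) as [s Hs].
  assert (Hs0 : s <> 0) by (intros ->; apply Hk, Ceq_minus; rewrite <- Hs; ring).
  set (l := (k + s) / 2).
  assert (Hl_inv : l * (k - l) = 1).
  { unfold l. transitivity ((k * k - s * s) / (2 * 2)); [field | rewrite Hs; field]. }
  assert (Hl : l <> 0) by (intros Hl; apply C1_nz; rewrite <- Hl_inv, Hl; ring).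
  assert (Hinv : / l = k - l) by (rewrite <- (Cmult_1_l (/ l)), <- Hl_inv; field; exact Hl).
  apply (planar_flow_hyperbolic l); [exact Hl | | rewrite Hinv; ring].
  intros Hl2. apply Hs0.
  assert (Hs_l : s = 2 * l - k) by (unfold l; field).
  replace s with ((l * l - l * (k - l)) / l) by (rewrite Hs_l; field; exact Hl).
  rewrite Hl2, Hl_inv. field. exact Hl.
Qed.

End PlanarFlow.

Lemma Fcubic_planar_energy (a b c d e x y z : C) :
  Fcubic a b c d e (x, y, z) = x * x - a * x - d + planar_energy (e * x) b c y z.
Proof. unfold Fcubic, planar_energy. ring. Qed.

Lemma Vx_complete (a b c d e : C) : complete_on_M a b c d e (Vx a b c d e).
Proof.
  intros [[x0 y0] z0] Hp.
  destruct (planar_flow_exists (e * x0) b c y0 z0) as (Y & Z & HY0 & HZ0 & HY & HZ & Henergy).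
  exists (fun t => (x0, Y t, Z t)). split; [| split].
  - now rewrite HY0, HZ0.
  - intros t. cbn [Vx fst snd]. split; [| split].
    + apply is_Cderive_const.
    + eapply is_Cderive_eq; [apply HY | ring].
    + eapply is_Cderive_eq; [apply HZ | ring].
  - intros t. unfold onM in *. rewrite Fcubic_planar_energy, Henergy, <- Fcubic_planar_energy.
    exact Hp.
Qed.

Definition rotate (p : pt) : pt := (snd (fst p), snd p, fst (fst p)).

Lemma rotate3 (p : pt) : rotate (rotate (rotate p)) = p.
Proof. now destruct p as [[x y] z]. Qed.

Lemma Fcubic_rotate (a b c d e : C) (p : pt) :
  Fcubic b c a d e (rotate p) = Fcubic a b c d e p.
Proof. destruct p as [[x y] z]. cbn. ring. Qed.

Lemma complete_on_M_rotate (a b c d e : C) (V W : pt -> pt) :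
  (forall p, V (rotate p) = rotate (W p)) ->
  complete_on_M b c a d e V -> complete_on_M a b c d e W.
Proof.
  intros HVW HV p Hp.
  destruct (HV (rotate p)) as (g & Hg0 & Hg & HgM).
  { unfold onM. now rewrite Fcubic_rotate. }
  exists (fun t => rotate (rotate (g t))). split; [| split].
  - now rewrite Hg0, rotate3.
  - intros t. destruct (Hg t) as (Hg1 & Hg2 & Hg3).
    rewrite <- (rotate3 (g t)), HVW in Hg1, Hg2, Hg3.
    cbn [rotate fst snd] in *. split; [| split]; assumption.
  - intros t. unfold onM. rewrite <- Fcubic_rotate, rotate3. apply HgM.
Qed.

Lemma Vx_rotate (a b c d e : C) (p : pt) :
  Vx b c a d e (rotate p) = rotate (Vy a b c d e p).
Proof. destruct p as [[x y] z]. unfold rotate; cbn. f_equal; ring. Qed.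

Lemma Vy_rotate (a b c d e : C) (p : pt) :
  Vy b c a d e (rotate p) = rotate (Vz a b c d e p).
Proof. destruct p as [[x y] z]. unfold rotate; cbn. f_equal; ring. Qed.

Theorem lemma2p1 (a b c d e : C) (he : e <> 0) :
  tangent_to_M a b c d e (Vx a b c d e) /\
  tangent_to_M a b c d e (Vy a b c d e) /\
  tangent_to_M a b c d e (Vz a b c d e) /\
  complete_on_M a b c d e (Vx a b c d e) /\
  complete_on_M a b c d e (Vy a b c d e) /\
  complete_on_M a b c d e (Vz a b c d e).
Proof.
  split; [| split; [| split; [| split; [| split]]]].
  1-3: intros [[x y] z] _; cbn; auto_Cderive; ring.
  - apply Vx_complete.
  - apply (complete_on_M_rotate _ _ _ _ _ (Vx b c a d e)); [apply Vx_rotate | apply Vx_complete].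
  - apply (complete_on_M_rotate _ _ _ _ _ (Vy b c a d e)); [apply Vy_rotate |].
    apply (complete_on_M_rotate _ _ _ _ _ (Vx c a b d e)); [apply Vx_rotate | apply Vx_complete].
Qed.
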